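(* Let $\mathcal G$ be a simple hypergraph with vertex set $[n]$. If all coefficients of the formal power series $I(\mathcal G,-x)^{-1}\in\mathbb Q[[x_1,\dots,x_n]]$ are nonnegative, then every edge of $\mathcal G$ has even cardinality.
   Context: A hypergraph $\mathcal G$ on $[n]$ is simple if every edge has at least two elements and no edge properly contains another. $I(\mathcal G,x)=\sum_I\prod_{v\in I}x_v$, summed over all independent subsets $I\subseteq[n]$ (those containing no edge), including $\emptyset$. $I(\mathcal G,-x)$ is obtained by substituting $x_i\mapsto-x_i$ for all $i$; it has constant term $1$, so its inverse exists in $\mathbb Q[[x_1,\dots,x_n]]$. *)

From HB Require Import structures.
From mathcomp Require Import all_boot all_order all_algebra.
Set Implicit Arguments. Unset Strict Implicit. Unset Printing Implicit Defensive.
Import Order.TTheory GRing.Theory Num.Theory.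
Local Open Scope ring_scope.

Definition hypergraph (n : nat) := {set {set 'I_n}}.

Definition simple_hg n (G : hypergraph n) : Prop :=
  (forall e, e \in G -> (2 <= #|e|)%N) /\
  (forall e f, e \in G -> f \in G -> ~~ (f \proper e)).

Definition independent n (G : hypergraph n) (I : {set 'I_n}) : bool :=
  [forall e in G, ~~ (e \subset I)].

(* Formal power series in x_1..x_n over Q: monomial exponent vectors
   'I_n -> nat mapped to rational coefficients. *)
Definition monom (n : nat) := 'I_n -> nat.
Definition fps (n : nat) := monom n -> rat.

Definition mmax n (m : monom n) : nat := \max_(i < n) m i.

(* Cauchy product coefficient: sum over all a <= m (componentwise). *)
Definition fps_mul n (P Q : fps n) : fps n := fun m =>
  \sum_(a : {ffun 'I_n -> 'I_(mmax m).+1} | [forall i, (a i <= m i)%N])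
     P (fun i => nat_of_ord (a i)) * Q (fun i => (m i - a i)%N).

Definition fps_one n : fps n := fun m => if [forall i, m i == 0%N] then 1 else 0.

(* I(G, -x) = sum over independent I of prod_{v in I} (-x_v) *)
Definition indep_poly_neg n (G : hypergraph n) : fps n := fun m =>
  if [forall i, (m i <= 1)%N] && independent G [set i | m i == 1%N]
  then (-1) ^+ #|[set i | m i == 1%N]| else 0.

From HB Require Import structures.
From mathcomp Require Import all_boot all_order all_algebra.
From Stdlib Require Import FunctionalExtensionality.
From mathcomp Require Import lra.
Import Order.TTheory GRing.Theory Num.Theory.
Set Implicit Arguments. Unset Strict Implicit. Unset Printing Implicit Defensive.
Local Open Scope ring_scope.

(* Let e be an edge of odd size. At a monomial supported inside e, the identity
   I(G,-x) F = 1 only involves the sets S \subset e, which by simplicity are all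
   independent except e itself. On monomials supported strictly inside e it is
   thus the identity (prod_(i in A) (1 - x_i)) F = 1, whence, by induction on
   the degree, F has coefficient 1 there. At x^e the identity then forces the
   coefficient 0 since #|e| is odd, and at x^e x_v with v in e it forces the
   coefficient -1, contradicting nonnegativity. *)

Lemma sum_sign_subsets (R : comRingType) (T : finType) (A : {set T}) :
  \sum_(S : {set T} | S \subset A) (-1) ^+ #|S| = (A == set0)%:R :> R.
Proof.
pose f i : R := if i \in A then -1 else 0.
have := bigA_distr 1 +%R f (fun=> 1).
have -> : \prod_i (f i + 1) = (A == set0)%:R.
  have [A0|/set0Pn[x xA]] := eqVneq A set0.
    by rewrite big1 // => i _; rewrite /f A0 inE add0r.
  by rewrite (bigD1 x) //= /f xA addNr mul0r.
move=> ->; rewrite big_mkcond; apply: eq_big => // S _.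
rewrite -big_mkcond /=; case: ifP => [SA | /negbT/subsetPn[x xS xA]].
  by rewrite -prodr_const; apply: eq_bigr => i iS; rewrite /f (subsetP SA).
by rewrite (bigD1 x) //= /f (negbTE xA) mul0r.
Qed.

Lemma sum_sign_proper_subsets (R : comRingType) (T : finType) (A : {set T}) :
  \sum_(S : {set T} | S \proper A) (-1) ^+ #|S| = (A == set0)%:R - (-1) ^+ #|A| :> R.
Proof.
rewrite -sum_sign_subsets [in RHS](bigD1 A) //= [RHS]addrC addKr.
by apply: eq_bigl => S; rewrite properEneq andbC.
Qed.

Section Monomials.

Variable n : nat.
Implicit Types (m : monom n) (S : {set 'I_n}).

Definition supp m : {set 'I_n} := [set i | m i != 0%N].
Definition mdeg m : nat := \sum_(i < n) m i.
Definition monom_set S : monom n := fun i => nat_of_bool (i \in S).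
(* The exponent of x^m / x^S; subtraction truncates, so this is only meaningful
   for S \subset supp m. *)
Definition msub m S : monom n := fun i => (m i - (i \in S))%N.
Definition mmulX m v : monom n := fun i => (m i + (i == v))%N.

Lemma supp_monom_set S : supp (monom_set S) = S.
Proof. by apply/setP => i; rewrite inE /monom_set; case: (i \in S). Qed.

Lemma supp_mmulX m v : v \in supp m -> supp (mmulX m v) = supp m.
Proof.
move=> vm; apply/setP => i; rewrite !inE addn_eq0 negb_and.
by case: (eqVneq i v) => [-> | _]; rewrite ?orbF // orbT; rewrite inE in vm.
Qed.

Lemma msub0 m : msub m set0 = m.
Proof. by apply: functional_extensionality => i; rewrite /msub inE subn0. Qed.

Lemma mmulXK m v : msub (mmulX m v) [set v] = m.
Proof. by apply: functional_extensionality => i; rewrite /msub in_set1 addnK. Qed.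

Lemma supp_msub m S : supp (msub m S) \subset supp m.
Proof. by apply/subsetP => i; rewrite !inE /msub; apply: contra => /eqP ->. Qed.

Lemma supp_msub_proper m S x :
  x \in S -> m x = 1%N -> supp (msub m S) \proper supp m.
Proof.
move=> xS mx1; rewrite properE supp_msub; apply/subsetPn; exists x.
  by rewrite inE mx1.
by rewrite inE /msub xS mx1.
Qed.

Lemma mdeg_msub m S : S \subset supp m -> S != set0 -> (mdeg (msub m S) < mdeg m)%N.
Proof.
move=> Sm /set0Pn[x xS]; have := subsetP Sm x xS; rewrite inE => mx0.
rewrite /mdeg (bigD1 x) //= [X in (_ < X)%N](bigD1 x) //= -addSn.
apply: leq_add; first by rewrite /msub xS subn1 prednK // lt0n.
by apply: leq_sum => i _; rewrite leq_subr.
Qed.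

Lemma fps_one_supp m : fps_one m = (supp m == set0)%:R.
Proof.
rewrite /fps_one; suff -> : [forall i, m i == 0%N] = (supp m == set0) by case: eqP.
apply/forallP/eqP => [m0 | /setP m0 i]; first by apply/setP => i; rewrite !inE m0.
by have := m0 i; rewrite !inE => /negbFE.
Qed.

Lemma fps_mul_sqfree (P Q : fps n) m :
    (forall a, P a != 0 -> forall i, (a i <= 1)%N) ->
  fps_mul P Q m = \sum_(S : {set 'I_n} | S \subset supp m) P (monom_set S) * Q (msub m S).
Proof.
move=> P01; rewrite /fps_mul; set M := mmax m.
have le_mM (i : 'I_n) : (m i <= M)%N by exact: leq_bigmax.
pose h S : {ffun 'I_n -> 'I_M.+1} := [ffun i => inord (i \in S)].
pose h' (a : {ffun 'I_n -> 'I_M.+1}) := [set i | nat_of_ord (a i) == 1%N].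
have hE S i : S \subset supp m -> nat_of_ord (h S i) = (i \in S).
  move=> Sm; rewrite ffunE inordK //; case iS: (i \in S) => //.
  rewrite ltnS; apply: leq_trans _ (le_mM i).
  by have := subsetP Sm i iS; rewrite inE lt0n.
(* Only the 0/1 exponent vectors a contribute; they are the images under h of
   the sets h' a, and a <= m means h' a \subset supp m. *)
rewrite (bigID (fun a : {ffun 'I_n -> 'I_M.+1} => [forall i, (a i <= 1)%N])) /=.
rewrite [X in _ + X]big1 ?addr0 => [|a /andP[_ /forallPn[i]]]; last first.
  move=> ai; suff /eqP -> : P (fun j => nat_of_ord (a j)) == 0 by rewrite mul0r.
  by apply: contraNT ai => /P01; apply.
rewrite (reindex_onto h h') => [|a /andP[_ /forallP a01]]; last first.
  apply/ffunP => i; rewrite ffunE inE -[RHS]inord_val; congr inord.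
  by have := a01 i; case: (nat_of_ord (a i)) => [|[|]].
rewrite [LHS](eq_bigl (fun S => S \subset supp m)) => [|S].
  apply: eq_bigr => S Sm.
  by congr (P _ * Q _); apply: functional_extensionality => i; rewrite hE.
apply/idP/idP => [/andP[/andP[/forallP hSm _] /eqP hSK] | Sm].
  apply/subsetP => i; rewrite -{1}hSK !inE => /eqP hSi.
  by have := hSm i; rewrite hSi lt0n.
rewrite andbC; apply/and3P; split.
- by apply/eqP/setP => i; rewrite inE hE //; case: (i \in S).
- apply/forallP => i; rewrite hE //; case iS: (i \in S) => //.
  by have := subsetP Sm i iS; rewrite inE lt0n.
- by apply/forallP => i; rewrite hE //; case: (i \in S).
Qed.

End Monomials.

Lemma indep_poly_neg_monom_set n (G : hypergraph n) (S : {set 'I_n}) :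
  indep_poly_neg G (monom_set S) = if independent G S then (-1) ^+ #|S| else 0.
Proof.
rewrite /indep_poly_neg; have -> : [set i | monom_set S i == 1%N] = S.
  by apply/setP => i; rewrite inE /monom_set; case: (i \in S).
suff -> : [forall i, (monom_set S i <= 1)%N] by [].
by apply/forallP => i; rewrite /monom_set; case: (i \in S).
Qed.

Lemma fps_mul_indep_poly_neg n (G : hypergraph n) (F : fps n) (m : monom n) :
  fps_mul (indep_poly_neg G) F m =
  \sum_(S : {set 'I_n} | S \subset supp m)
    (if independent G S then (-1) ^+ #|S| else 0) * F (msub m S).
Proof.
rewrite fps_mul_sqfree => [|a].
  by apply: eq_bigr => S _; rewrite indep_poly_neg_monom_set.
by rewrite /indep_poly_neg; case: ifP => [/andP[/forallP a01 _] _ | _]; rewrite ?eqxx.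
Qed.

Section OddEdge.

Variables (n : nat) (G : hypergraph n) (F : fps n) (e : {set 'I_n}).
Hypothesis simpleG : simple_hg G.
Hypothesis F_inverse : forall m, fps_mul (indep_poly_neg G) F m = fps_one m.
Hypothesis eG : e \in G.

Lemma independent_sub_edge (S : {set 'I_n}) :
  S \subset e -> independent G S = ~~ (e \subset S).
Proof.
move=> Se; apply/forallP/idP => [/(_ e) | eS f]; first by rewrite eG.
apply/implyP => fG; apply/negP => fS.
have := simpleG.2 e f eG fG; rewrite properE (subset_trans fS Se) /= negbK => ef.
by move/negP: eS; apply; apply: subset_trans ef fS.
Qed.

Lemma coef_inverse_edge (m : monom n) : supp m \subset e ->
  \sum_(S : {set 'I_n} | S \subset supp m)
    (if ~~ (e \subset S) then (-1) ^+ #|S| else 0) * F (msub m S) = (supp m == set0)%:R.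
Proof.
move=> me; rewrite -fps_one_supp -F_inverse fps_mul_indep_poly_neg.
by apply: eq_bigr => S Sm; rewrite independent_sub_edge // (subset_trans Sm me).
Qed.

Lemma F_proper_edge (m : monom n) : supp m \proper e -> F m = 1.
Proof.
have [d] := ubnP (mdeg m); elim: d m => // d IH m ltmd me.
have : \sum_(S : {set 'I_n} | S \subset supp m) (-1) ^+ #|S| * (F (msub m S) - 1) = 0.
  under eq_bigr do rewrite mulrBr mulr1.
  rewrite sumrB sum_sign_subsets -(coef_inverse_edge (proper_sub me)).
  apply/eqP; rewrite subr_eq0; apply/eqP/eq_bigr => S Sm; rewrite ifT //.
  by apply: contraL me => eS; rewrite properE (subset_trans eS Sm) andbF.
rewrite (bigD1 set0) ?sub0set //= big1 ?addr0 => [|S /andP[Sm S0]].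
  by rewrite cards0 expr0 mul1r msub0 => /eqP; rewrite subr_eq0 => /eqP.
rewrite IH ?subrr ?mulr0 //; first exact: leq_trans (mdeg_msub Sm S0) _.
exact: sub_proper_trans (supp_msub _ _) me.
Qed.

Section Odd.

Hypothesis odd_e : odd #|e|.

Let e_neq0 : e != set0.
Proof. by apply: contraTneq odd_e => ->; rewrite cards0. Qed.

Lemma F_excess_odd_edge (m : monom n) :
    supp m = e -> [set i | (1 < m i)%N] \proper e ->
  \sum_(S : {set 'I_n} | S \subset [set i | (1 < m i)%N])
    (-1) ^+ #|S| * (F (msub m S) - 1) = -1.
Proof.
set T := [set i | (1 < m i)%N] => me Te.
have coef_proper : \sum_(S : {set 'I_n} | S \proper e) (-1) ^+ #|S| * F (msub m S) = 0.
  have := coef_inverse_edge (m := m).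
  rewrite me (negbTE e_neq0) (bigD1 e) //= => /(_ (subxx e)).
  rewrite subxx mul0r add0r mulr0n => coefE.
  rewrite -[RHS]coefE; apply: eq_big => [S | S]; first by rewrite properEneq andbC.
  by rewrite properE => /andP[_ eS]; rewrite eS.
have excess_proper :
    \sum_(S : {set 'I_n} | S \proper e) (-1) ^+ #|S| * (F (msub m S) - 1) = -1.
  under eq_bigr do rewrite mulrBr mulr1.
  rewrite sumrB coef_proper sum_sign_proper_subsets (negbTE e_neq0) -signr_odd odd_e.
  by rewrite expr1 mulr0n !sub0r opprK.
(* Removing a point of multiplicity 1 leaves a monomial supported strictly
   inside e, where F is 1; so only the sets S \subset T contribute. *)
rewrite -[RHS]excess_proper [RHS](bigID (fun S : {set 'I_n} => S \subset T)) /=.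
rewrite [X in _ + X]big1 ?addr0 => [|S /andP[Se /subsetPn[x xS]]].
  by apply: eq_bigl => S; apply/esym/andb_idl => ST; apply: sub_proper_trans ST Te.
rewrite inE -leqNgt => mx_le1.
have : x \in supp m by rewrite me (subsetP (proper_sub Se)).
rewrite inE => mx0.
have mx1 : m x = 1%N by apply/eqP; rewrite eqn_leq mx_le1 lt0n.
by rewrite F_proper_edge ?subrr ?mulr0 // -me (supp_msub_proper xS).
Qed.

Lemma F_monom_set_odd_edge : F (monom_set e) = 0.
Proof.
have T0 : [set i | (1 < monom_set e i)%N] = set0.
  by apply/setP => i; rewrite !inE /monom_set; case: (i \in e).
have := F_excess_odd_edge (supp_monom_set e); rewrite T0 proper0 => /(_ e_neq0).
rewrite (big_pred1 set0) => [|S]; last by rewrite subset0.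
rewrite cards0 expr0 mul1r msub0; lra.
Qed.

Lemma F_mmulX_odd_edge v : v \in e -> F (mmulX (monom_set e) v) = F (monom_set e) - 1.
Proof.
move=> ve; set m := mmulX (monom_set e) v.
have me : supp m = e by rewrite supp_mmulX supp_monom_set.
have Tv : [set i | (1 < m i)%N] = [set v].
  apply/setP => i; rewrite !inE /m /mmulX /monom_set.
  by case: (eqVneq i v) => [->|]; rewrite ?ve // addn0; case: (i \in e).
have vTe : [set v] \proper e.
  by rewrite properEcard sub1set ve cards1 (simpleG.1 e eG).
have := F_excess_odd_edge me; rewrite Tv => /(_ vTe).
rewrite (bigD1 set0) ?sub0set //= (big_pred1 [set v]) => [|S]; last first.
  rewrite subset1 andb_orl andbN orbF; apply/andb_idr => /eqP ->.
  by rewrite -cards_eq0 cards1.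
rewrite cards0 cards1 expr0 expr1 mul1r msub0 /m mmulXK; lra.
Qed.

End Odd.

End OddEdge.

Theorem proposition8p1 (n : nat) (G : hypergraph n) (F : fps n) :
  simple_hg G ->
  (forall m, fps_mul (indep_poly_neg G) F m = fps_one m) ->
  (forall m, 0 <= F m) ->
  forall e, e \in G -> ~~ odd #|e|.
Proof.
move=> simpleG F_inverse F_ge0 e eG; apply/negP => odd_e.
have [v ve] : exists v, v \in e.
  by apply/card_gt0P; apply: leq_trans (simpleG.1 e eG).
have := F_ge0 (mmulX (monom_set e) v).
rewrite (F_mmulX_odd_edge simpleG F_inverse eG odd_e ve).
rewrite (F_monom_set_odd_edge simpleG F_inverse eG odd_e); lra.
Qed.
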